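(* Let $G$ be a mirror graph, let $xy$ be an edge of $G$, let $v\in V(G)$ and $v'=v^{\alpha_{xy}}$. Then there exists a path $P=v v_1 v_2\cdots v_{n-1}v'$ in $G$ from $v$ to $v'$ such that $\alpha_{xy}=\alpha_{vv_1}\alpha_{v_1v_2}\alpha_{v_2v_3}\cdots\alpha_{v_{n-1}v'}$.
   Context: A partition $\{E_1,\dots,E_k\}$ of the edges of a finite connected simple graph $G$ is a mirror partition if for every $i$ there is an automorphism $\alpha_i$ with (i) $\alpha_i(u)=v,\alpha_i(v)=u$ for every $uv\in E_i$ and (ii) $G-E_i$ has exactly two components, swapped isomorphically by $\alpha_i$; $G$ is a mirror graph if it has one. Mirror graphs are partial cubes whose mirror partition is the partition into $\Theta$-classes, where $ab\,\Theta\,xy$ iff $d(a,x)+d(b,y)\neq d(a,y)+d(b,x)$. For an edge $xy$ of a mirror graph, $\alpha_{xy}$ denotes the unique automorphism of $G$ that swaps the endpoints of every edge $\Theta$-equivalent to $xy$ (the mirror automorphism of that class); it is an involution and $\alpha_{xy}=\alpha_{x'y'}$ whenever $xy\,\Theta\,x'y'$. Automorphisms act on the right: $v^{\alpha\beta}=(v^{\alpha})^{\beta}$. *)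

From mathcomp Require Import all_boot all_fingroup.
Set Implicit Arguments. Unset Strict Implicit. Unset Printing Implicit Defensive.

Section MirrorDefs.
Variables (T : finType) (e : rel T).

Definition simple_graph := symmetric e /\ irreflexive e.
Definition connected_graph := forall u w : T, connect e u w.

Definition edges : {set {set T}} := [set E : {set T} | [exists u, exists w, e u w && (E == [set u; w])]].

Definition is_aut (a : {perm T}) := forall u w : T, e (a u) (a w) = e u w.

Definition erem (E : {set {set T}}) : rel T :=
  fun u w => e u w && ([set u; w] \notin E).

Definition comps (E : {set {set T}}) : {set {set T}} :=
  [set [set w | connect (erem E) u w] | u : T].

Definition mirror_partition (P : {set {set {set T}}}) :=
  partition P edges /\
  forall E, E \in P -> exists a : {perm T},
    [/\ is_aut a,
        (forall u w, [set u; w] \in E -> a u = w /\ a w = u),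
        #|comps E| = 2,
        (forall C, C \in comps E -> (a @: C) \in comps E /\ a @: C != C) &
        (forall u w, erem E u w = erem E (a u) (a w))].

Definition mirror_graph :=
  [/\ simple_graph, connected_graph & exists P, mirror_partition P].

(* shortest-path distance: least n with a walk of length n
   (only meaningful for connected graphs) *)
Definition walkn (n : nat) (x y : T) : bool :=
  [exists p : n.-tuple T, path e x p && (last x p == y)].
Definition dist (x y : T) : nat := find (fun n => walkn n x y) (iota 0 #|T|).

(* Djokovic-Winkler relation Theta on edges ab, xy *)
Definition Theta (a b x y : T) : bool :=
  [&& e a b, e x y & dist a x + dist b y != dist a y + dist b x].

Definition mirror_aut_of (x y : T) (a : {perm T}) : bool :=
  [forall u, forall w, Theta u w x y ==> ((a u == w) && (a w == u))] &&
  [forall u, forall w, e (a u) (a w) == e u w].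

(* alpha_xy: the (unique, for mirror graphs) automorphism swapping the
   endpoints of every edge Theta-equivalent to xy *)
Definition alpha (x y : T) : {perm T} :=
  odflt 1%g [pick a : {perm T} | mirror_aut_of x y a].

End MirrorDefs.

From mathcomp Require Import all_boot all_fingroup zify.
Set Implicit Arguments. Unset Strict Implicit. Unset Printing Implicit Defensive.

(* Induct along a walk from v to x. At x the walk x y works, since alpha_xy swaps
   x and y. If v ~ u and a walk from u to u^alpha has product alpha = alpha_xy,
   prepend v and append v^alpha: the product becomes
   alpha_vu * alpha * alpha_{u^alpha v^alpha} = alpha_vu * alpha_uv * alpha = alpha,
   because automorphisms conjugate mirror automorphisms and alpha_uv is an involution.
   Both facts rest on the uniqueness of the mirror automorphism of a Theta-class F:
   two automorphisms swapping the edges of F send a vertex z to the same side of F,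
   and to points at equal distances from every vertex of the other side (a shortest
   path into that side crosses F at an edge whose ends they both swap); such a point
   is unique. *)

Section Distance.
Variables (T : finType) (e : rel T).

Lemma is_autV g : is_aut e g -> is_aut e g^-1.
Proof. by move=> autg u w; rewrite -autg !permKV. Qed.

Lemma dist_le x p : path e x p -> dist e x (last x p) <= size p.
Proof.
move=> ep; rewrite /dist; have [small|large] := ltnP (size p) #|T|; last first.
  by apply: leq_trans large; rewrite -{2}(size_iota 0 #|T|) find_size.
case: leqP => // lt_p; have := before_find 0 lt_p; rewrite nth_iota // add0n.
by move/negbT/existsPn/(_ (in_tuple p)); rewrite /= ep eqxx.
Qed.

Lemma dist_edge x y : e x y -> dist e x y <= 1.
Proof. by move=> exy; have := @dist_le x [:: y]; rewrite /= exy; apply. Qed.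

Hypothesis conn : connected_graph e.

Lemma dist_walk x y :
  exists p, [/\ path e x p, last x p = y & size p = dist e x y].
Proof.
have /connectP[p0 ep0 ->] := conn x y; case/shortenP: ep0 => p ep uniq_p _.
have small : size p < #|T| by have := max_card (mem (x :: p)); rewrite (card_uniqP uniq_p).
have has_walk : has (fun n => walkn e n x (last x p)) (iota 0 #|T|).
  apply/hasP; exists (size p); first by rewrite mem_iota.
  by apply/existsP; exists (in_tuple p); rewrite /= ep eqxx.
have lt_d := has_walk; rewrite has_find size_iota in lt_d.
have := nth_find 0 has_walk; rewrite nth_iota // add0n => /existsP[t /andP[et /eqP last_t]].
by exists t; rewrite size_tuple last_t.
Qed.

Lemma dist_triangle x y z : dist e x z <= dist e x y + dist e y z.
Proof.
have [p [ep <- <-]] := dist_walk x y; have [q [eq <- <-]] := dist_walk (last x p) z.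
by rewrite -size_cat -last_cat; apply: dist_le; rewrite cat_path ep.
Qed.

Lemma dist_last_step x y : x != y ->
  exists2 y1, e y1 y & dist e x y1 < dist e x y.
Proof.
have [p [+ <- <-]] := dist_walk x y; case/lastP: p => [|p z]; first by rewrite eqxx.
rewrite rcons_path last_rcons size_rcons => /andP[ep ez] _.
by exists (last x p) => //; rewrite ltnS dist_le.
Qed.

Lemma dist_aut g x y : is_aut e g -> dist e (g x) (g y) = dist e x y.
Proof.
suff le_dist h u w : is_aut e h -> dist e (h u) (h w) <= dist e u w.
  move=> autg; apply/eqP; rewrite eqn_leq le_dist //=.
  by have := le_dist g^-1%g (g x) (g y) (is_autV autg); rewrite !permK.
move=> auth; have [p [ep <- <-]] := dist_walk u w.
rewrite -(size_map h) -(last_map h); apply: dist_le; rewrite path_map.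
by apply: sub_path ep => s t /=; rewrite auth.
Qed.

Lemma Theta_aut g p q u w : is_aut e g ->
  Theta e (g p) (g q) (g u) (g w) = Theta e p q u w.
Proof. by move=> autg; rewrite /Theta !autg !dist_aut. Qed.

End Distance.

Section Cuts.
Variables (T : finType) (e : rel T) (E : {set {set T}}).

Definition swaps (a : {perm T}) :=
  forall u w, [set u; w] \in E -> a u = w /\ a w = u.

Lemma erem_sym : symmetric e -> symmetric (erem e E).
Proof. by move=> sym u w; rewrite /erem sym setUC. Qed.

Lemma path_cross x p : path e x p -> ~~ connect (erem e E) x (last x p) ->
  exists p1 t p2, p = p1 ++ t :: p2 /\ [set last x p1; t] \in E.
Proof.
elim: p x => [|x1 p IHp] x /=; first by rewrite connect0.
case/andP=> ex1 ep not_linked; case cut_x1: ([set x; x1] \in E).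
  by exists [::], x1, p.
have [|p1 [t [p2 [-> cut_t]]]] := IHp x1 ep.
  apply: contra not_linked; apply: connect_trans; apply: connect1.
  by rewrite /erem ex1 cut_x1.
by exists (x1 :: p1), t, p2.
Qed.

Lemma dist_cross x p : path e x p -> ~~ connect (erem e E) x (last x p) ->
  exists t1 t2, [/\ [set t1; t2] \in E, e t1 t2 &
                    dist e x t1 + (dist e t2 (last x p)).+1 <= size p].
Proof.
move=> ep /(path_cross ep)[p1 [t [p2 [def_p cut_t]]]]; subst p.
move: ep; rewrite cat_path /= last_cat /= => /and3P[ep1 et ep2].
exists (last x p1), t; split=> //.
by rewrite size_cat /= !addnS ltnS leq_add ?dist_le.
Qed.

Lemma erem_aut a : is_aut e a -> swaps a -> {homo a : u w / erem e E u w}.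
Proof.
move=> auta swa u w /andP[euw uncut]; rewrite /erem auta euw /=.
apply: contraNN uncut => cut_a; have [/perm_inj au /perm_inj aw] := swa _ _ cut_a.
by rewrite au aw setUC in cut_a.
Qed.

Lemma connect_erem_aut a : is_aut e a -> swaps a ->
  {homo a : u w / connect (erem e E) u w}.
Proof.
move=> auta swa u w /connectP[p ep ->]; apply/connectP.
by exists (map a p); [apply: homo_path ep; apply: erem_aut | rewrite last_map].
Qed.

Hypothesis conn : connected_graph e.

Lemma dist_swaps_le a b z y : is_aut e a -> is_aut e b -> swaps a -> swaps b ->
  ~~ connect (erem e E) (b z) y -> dist e (a z) y <= dist e (b z) y.
Proof.
move=> auta autb swa swb not_linked.
have [p [ep last_p size_p]] := dist_walk conn (b z) y.
have [|t1 [t2 [cut_t et]]] := dist_cross ep; first by rewrite last_p.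
rewrite last_p size_p => le_p; have [_ at2] := swa _ _ cut_t; have [_ bt2] := swb _ _ cut_t.
have same_t1 : dist e (a z) t1 = dist e (b z) t1.
  by rewrite -{1}at2 -bt2 !dist_aut.
have := dist_triangle conn (a z) t1 y; have := dist_triangle conn t1 t2 y.
have := dist_edge et; lia.
Qed.

End Cuts.

Lemma mirror_aut_ofP (T : finType) (e : rel T) x y a :
  reflect (is_aut e a /\ forall p q, Theta e p q x y -> a p = q /\ a q = p)
          (mirror_aut_of e x y a).
Proof.
apply: (iffP andP) => [[/forallP swa /forallP auta] | [auta swa]]; split.
- by move=> u w; apply/eqP; move/forallP: (auta u); apply.
- by move=> p q th; move/forallP/(_ q): (swa p); rewrite th => /andP[/eqP-> /eqP->].
- by apply/forallP => p; apply/forallP => q; apply/implyP => /swa[-> ->]; rewrite !eqxx.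
- by apply/forallP => u; apply/forallP => w; rewrite auta.
Qed.

Section MirrorPartition.
Variables (T : finType) (e : rel T) (P : {set {set {set T}}}).
Hypotheses (sym : symmetric e) (irr : irreflexive e) (conn : connected_graph e)
  (mP : mirror_partition e P).

Local Notation linked E := (connect (erem e E)).

Lemma linkedC E : connect_sym (erem e E).
Proof. exact: sym_connect_sym (erem_sym E sym). Qed.

Lemma component_eq E u w :
  linked E u w -> [set z | linked E u z] = [set z | linked E w z].
Proof. by move=> uw; apply/setP => z; rewrite !inE (same_connect (linkedC E) uw). Qed.

Lemma class_of_edge u w : e u w -> exists2 H, H \in P & [set u; w] \in H.
Proof.
have [/and3P[/eqP cover _ _] _] := mP => euw.
have : [set u; w] \in edges e.
  by rewrite inE; apply/existsP; exists u; apply/existsP; exists w; rewrite euw eqxx.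
by rewrite -cover => /bigcupP[H]; exists H.
Qed.

Lemma edge_of_class H p q : H \in P -> [set p; q] \in H -> e p q.
Proof.
have [/and3P[/eqP cover _ _] _] := mP => HP pqH.
have : [set p; q] \in edges e by rewrite -cover; apply/bigcupP; exists H.
rewrite inE => /existsP[u /existsP[w /andP[euw /eqP/setP pq_uw]]].
move: (pq_uw p) (pq_uw q) (pq_uw u) (pq_uw w); rewrite !inE !eqxx ?orbT /=.
case/esym/orP => /eqP->; case/esym/orP => /eqP->; rewrite ?eqxx ?orbb //=.
- by move=> _ /eqP wu; rewrite wu irr in euw.
- by rewrite sym.
- by move=> /eqP uw; rewrite uw irr in euw.
Qed.

Lemma cut_separates H r s : H \in P -> [set r; s] \in H -> ~~ linked H r s.
Proof.
move=> HP rsH; have [_ /(_ H HP)[a [_ swa _ flip _]]] := mP.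
set C := [set z | linked H r z].
have [/imsetP[t _ aC] aC_neq] : a @: C \in comps e H /\ a @: C != C.
  by apply: flip; apply/imsetP; exists r.
apply/negP => rs; case/negP: aC_neq.
have : s \in [set z | linked H t z].
  by rewrite -aC -(swa _ _ rsH).1; apply: imset_f; rewrite inE connect0.
rewrite inE => ts; apply/eqP.
by rewrite aC (component_eq ts) /C (component_eq rs).
Qed.

Lemma linked_either H r s z : H \in P -> [set r; s] \in H ->
  linked H r z || linked H s z.
Proof.
move=> HP rsH; have [_ /(_ H HP)[_ [_ _ two _ _]]] := mP.
set Cr := [set w | linked H r w]; set Cs := [set w | linked H s w].
have Cr_neq_Cs : Cr != Cs.
  apply: contraNneq (cut_separates HP rsH) => CrCs.
  have : s \in Cs by rewrite inE connect0.
  by rewrite -CrCs inE.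
have comps2 : comps e H = [set Cr; Cs].
  apply/esym/eqP; rewrite eqEcard two cards2 Cr_neq_Cs andbT.
  by apply/subsetP => C /set2P[]->; apply/imsetP; [exists r | exists s].
have z_in : z \in [set w | linked H z w] by rewrite inE connect0.
have : [set w | linked H z w] \in comps e H by apply/imsetP; exists z.
by rewrite comps2 => /set2P[] Cz; rewrite Cz inE in z_in; rewrite z_in ?orbT.
Qed.

Lemma card_component H r s z : H \in P -> [set r; s] \in H ->
  #|[set w | linked H z w]| * 2 = #|T|.
Proof.
move=> HP rsH; have [_ /(_ H HP)[a [auta swa _ _ _]]] := mP.
have [ar as_] := swa _ _ rsH.
have le_card u w : a u = w -> #|[set x | linked H u x]| <= #|[set x | linked H w x]|.
  move=> <-; rewrite -(card_imset _ (@perm_inj _ a)); apply: subset_leq_card.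
  apply/subsetP => y /imsetP[x]; rewrite inE => ux ->.
  by rewrite inE; apply: connect_erem_aut.
have Cs_compl : [set x | linked H s x] = ~: [set x | linked H r x].
  apply/setP => x; rewrite !inE; apply/idP/idP => [sx | /negPf rx].
    apply: contraNN (cut_separates HP rsH) => rx.
    by rewrite (connect_trans rx) // linkedC.
  by have := linked_either x HP rsH; rewrite rx.
have card_rs : #|[set x | linked H r x]| = #|[set x | linked H s x]|.
  by apply/eqP; rewrite eqn_leq (le_card _ _ ar) (le_card _ _ as_).
have half_r : #|[set x | linked H r x]| * 2 = #|T|.
  by rewrite -(cardsC [set x | linked H r x]) -Cs_compl -card_rs muln2 addnn.
by have /orP[] := linked_either z HP rsH => /component_eq <-; rewrite // -card_rs.
Qed.

Lemma dist_lt_of_linked H r s x : H \in P -> [set r; s] \in H ->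
  linked H r x -> dist e x r < dist e x s.
Proof.
move=> HP rsH rx; have [_ /(_ H HP)[a [auta swa _ _ _]]] := mP.
have [p [ep last_p size_p]] := dist_walk conn x s.
have [|t1 [t2 [cut_t _ le_p]]] := dist_cross (E := H) ep.
  by rewrite last_p; apply: contraNN (cut_separates HP rsH); apply: connect_trans rx.
rewrite last_p size_p in le_p; have [_ at2] := swa _ _ cut_t; have [_ as_] := swa _ _ rsH.
have : dist e t1 r = dist e t2 s by rewrite -at2 -as_ dist_aut.
have := dist_triangle conn x t1 r; lia.
Qed.

Lemma Theta_class F p q u w : F \in P -> [set p; q] \in F -> [set u; w] \in F ->
  Theta e p q u w.
Proof.
move=> FP pqF uwF; rewrite /Theta (edge_of_class FP pqF) (edge_of_class FP uwF) /=.
wlog up : u w uwF / linked F u p.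
  move=> wlog_up; have /orP[up|wp] := linked_either p FP uwF; first exact: wlog_up.
  by rewrite eq_sym; apply: wlog_up wp; rewrite setUC.
have wq : linked F w q.
  have /orP[uq|//] := linked_either q FP uwF.
  by case/negP: (cut_separates FP pqF); rewrite linkedC in up; apply: connect_trans up uq.
have wuF : [set w; u] \in F by rewrite setUC.
have := dist_lt_of_linked FP uwF up; have := dist_lt_of_linked FP wuF wq; lia.
Qed.

Lemma linked_eq_of_no_inner_edge F H c c' r s :
  F \in P -> H \in P -> [set c; c'] \in F -> [set r; s] \in H ->
  (forall u w, [set u; w] \in H -> linked F c u -> linked F c w -> False) ->
  linked H c =1 linked F c.
Proof.
move=> FP HP cF rsH no_inner.
have walk x p : linked F c x -> linked H c x -> path (erem e F) x p ->
    linked H c (last x p).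
  elim: p x => [|x1 p IHp] x //= cx_F cx_H /andP[x_x1 ep].
  have cx1_F : linked F c x1 := connect_trans cx_F (connect1 x_x1).
  apply: IHp ep => //; apply: connect_trans cx_H (connect1 _).
  move: x_x1 => /andP[ex_x1 _]; rewrite /erem ex_x1 /=; apply/negP => cut_x.
  exact: no_inner cut_x cx_F cx1_F.
have sub : [set y | linked F c y] \subset [set y | linked H c y].
  by apply/subsetP => _ /[!inE] /connectP[p ep ->]; apply: walk ep; rewrite connect0.
have : [set y | linked F c y] = [set y | linked H c y].
  apply/eqP; rewrite eqEcard sub /= -(leq_pmul2r (_ : 0 < 2)) //.
  by rewrite (card_component c FP cF) (card_component c HP rsH).
by move=> /setP eqFH y; have := eqFH y; rewrite !inE.
Qed.

(* A Theta-class H separating p from q either has an edge inside the c-side of F,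
   whose endpoints p and q would see at opposite distance orders, or has the same
   cut as F, which does not separate p from q. *)
Lemma eq_of_dist_profile F c c' p q : F \in P -> [set c; c'] \in F ->
  ~~ linked F c p -> ~~ linked F c q ->
  (forall y, linked F c y -> dist e p y = dist e q y) -> p = q.
Proof.
move=> FP cF cp cq same_dist; have [//|] := eqVneq p q; rewrite eq_sym => neq_qp.
have [p1 ep1p lt_p1] := dist_last_step conn neq_qp.
have [H HP p1pH] := class_of_edge ep1p; have pp1H : [set p; p1] \in H by rewrite setUC.
have not_pp1 := cut_separates HP pp1H.
have p1q : linked H p1 q.
  have /orP[pq|//] := linked_either q HP pp1H.
  by have := dist_lt_of_linked HP pp1H pq; rewrite ltnNge ltnW.
have [inner|no_inner] := boolP
  [exists r, exists s, [&& [set r; s] \in H, linked F c r & linked F c s]].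
- case/existsP: inner => r /existsP[s /and3P[rsH cr cs]].
  wlog rp : r s rsH cr cs / linked H r p.
    move=> wlog_rp; have /orP[rp|sp] := linked_either p HP rsH; first exact: (wlog_rp r s).
    by apply: (wlog_rp s r) => //; rewrite setUC.
  have sq : linked H s q.
    have /orP[rq|//] := linked_either q HP rsH; case/negP: not_pp1.
    rewrite linkedC in rp; rewrite linkedC in p1q.
    exact: connect_trans (connect_trans rp rq) p1q.
  have srH : [set s; r] \in H by rewrite setUC.
  have := dist_lt_of_linked HP rsH rp; have := dist_lt_of_linked HP srH sq.
  by rewrite !same_dist // => /ltn_trans lt /lt; rewrite ltnn.
- have eqH : linked H c =1 linked F c.
    apply: linked_eq_of_no_inner_edge FP HP cF pp1H _ => u w uwH cu cw.
    by case/existsP: no_inner; exists u; apply/existsP; exists w; rewrite uwH cu cw.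
  have /orP[pc|p1c] := linked_either c HP pp1H.
    by case/negP: cp; rewrite -eqH linkedC.
  by case/negP: cq; rewrite -eqH; rewrite linkedC in p1c; apply: connect_trans p1c p1q.
Qed.

Lemma swaps_uniq F u w a b : F \in P -> [set u; w] \in F ->
  is_aut e a -> is_aut e b -> swaps F a -> swaps F b -> a = b.
Proof.
move=> FP uwF auta autb swa swb; apply/permP => z.
wlog uz : u w uwF / linked F u z.
  move=> wlog_uz; have /orP[uz|wz] := linked_either z FP uwF; first exact: (wlog_uz u w).
  by apply: (wlog_uz w u) => //; rewrite setUC.
have w_side g : is_aut e g -> swaps F g -> linked F w (g z).
  by move=> autg swg; rewrite -(swg _ _ uwF).1; apply: connect_erem_aut.
have not_u_side y : linked F w y -> ~~ linked F u y.
  move=> wy; apply: contraNN (cut_separates FP uwF) => uy.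
  by rewrite (connect_trans uy) // linkedC.
apply: (eq_of_dist_profile FP uwF); rewrite ?not_u_side ?w_side // => y uy.
have other_side g : is_aut e g -> swaps F g -> ~~ linked F (g z) y.
  move=> autg swg; apply: contraL uy => gzy.
  exact/not_u_side/(connect_trans (w_side g autg swg) gzy).
by apply/eqP; rewrite eqn_leq !(dist_swaps_le (E := F) conn) ?other_side.
Qed.

Lemma mirror_aut_swaps F x y a : F \in P -> [set x; y] \in F ->
  mirror_aut_of e x y a -> swaps F a.
Proof. by move=> FP xyF /mirror_aut_ofP[_ swa] p q pqF; apply/swa/(Theta_class FP pqF xyF). Qed.

Lemma mirror_aut_uniq x y a b : e x y ->
  mirror_aut_of e x y a -> mirror_aut_of e x y b -> a = b.
Proof.
move=> exy Ma Mb; have [F FP xyF] := class_of_edge exy.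
have [[auta _] [autb _]] := (mirror_aut_ofP _ _ _ _ Ma, mirror_aut_ofP _ _ _ _ Mb).
exact: swaps_uniq FP xyF auta autb (mirror_aut_swaps FP xyF Ma) (mirror_aut_swaps FP xyF Mb).
Qed.

Lemma alpha_mirror x y a : e x y -> mirror_aut_of e x y a -> alpha e x y = a.
Proof.
move=> exy Ma; rewrite /alpha; case: pickP => [b Mb | none] /=.
  exact: mirror_aut_uniq Mb Ma.
by rewrite none in Ma.
Qed.

Lemma alpha_swaps_edge x y : e x y ->
  mirror_aut_of e x y (alpha e x y) -> alpha e x y x = y.
Proof.
move=> exy /mirror_aut_ofP[_ swa]; have [F FP xyF] := class_of_edge exy.
exact: (swa _ _ (Theta_class FP xyF xyF)).1.
Qed.

Lemma mirror_aut_conj g x y a : is_aut e g -> mirror_aut_of e x y a ->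
  mirror_aut_of e (g x) (g y) (g^-1 * a * g)%g.
Proof.
move=> autg /mirror_aut_ofP[auta swa]; apply/mirror_aut_ofP; split.
  by move=> u w; rewrite !permM autg auta is_autV.
move=> p q; rewrite -[p](permKV g) -[q](permKV g) (Theta_aut conn) //.
by move=> /swa[ap aq]; rewrite !permM !permK ap aq.
Qed.

Lemma alpha_conj g x y : e x y -> is_aut e g ->
  alpha e (g x) (g y) = (g^-1 * alpha e x y * g)%g.
Proof.
move=> exy autg; have egxy : e (g x) (g y) by rewrite autg.
rewrite {2}/alpha; case: pickP => [a Ma | none] /=.
  exact: alpha_mirror egxy (mirror_aut_conj autg Ma).
rewrite mulg1 mulVg /alpha; case: pickP => [b Mb | //] /=.
by have := mirror_aut_conj (is_autV autg) Mb; rewrite !permK none.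
Qed.

Lemma alpha_invol x y : e x y -> (alpha e x y * alpha e x y = 1)%g.
Proof.
move=> exy; rewrite /alpha; case: pickP => [a Ma | _] /=; last by rewrite mulg1.
have Ma' : mirror_aut_of e x y a^-1.
  case/mirror_aut_ofP: (Ma) => auta swa; apply/mirror_aut_ofP; split.
    exact: is_autV.
  by move=> p q /swa[ap aq]; split; apply: (canLR (permK a)).
by rewrite {2}(mirror_aut_uniq exy Ma Ma') mulgV.
Qed.

Lemma alpha_sym x y : alpha e x y = alpha e y x.
Proof.
rewrite /alpha; congr odflt; apply: eq_pick => a; rewrite /mirror_aut_of.
congr andb; apply: eq_forallb => p; apply: eq_forallb => q.
by rewrite /Theta (sym x) eq_sym.
Qed.

Definition alpha_walk (g : {perm T}) v p :=
  [/\ path e v p, last v p = g v & g = (\prod_(b <- pairmap (alpha e) v p) b)%g].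

Lemma alpha_walk_cons g v u p : is_aut e g -> e v u ->
  alpha_walk g u p -> alpha_walk g v (u :: rcons p (g v)).
Proof.
move=> autg evu [up last_p prod_p]; split=> /=.
- by rewrite evu rcons_path up last_p autg sym.
- by rewrite last_rcons.
- rewrite -cats1 pairmap_cat big_cons big_cat big_seq1 /= -prod_p last_p.
  rewrite alpha_conj ?(sym u) // (alpha_sym u v) !mulgA mulgK alpha_invol //.
  by rewrite mul1g.
Qed.

End MirrorPartition.

Theorem lemma5 (T : finType) (e : rel T) (x y v : T) :
  mirror_graph e -> e x y ->
  exists p : seq T,
    [/\ path e v p,
        last v p = alpha e x y v &
        alpha e x y = (\prod_(a <- pairmap (alpha e) v p) a)%g].
Proof.
move=> [[sym irr] conn [P mP]] exy.
case: (pickP (mirror_aut_of e x y)) => [a Ma | none]; last first.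
  (* without a mirror automorphism, alpha defaults to the identity *)
  have alpha1 : alpha e x y = 1%g by rewrite /alpha; case: pickP => // a; rewrite none.
  by exists [::]; rewrite alpha1 perm1 big_nil.
have Malpha : mirror_aut_of e x y (alpha e x y).
  by rewrite (alpha_mirror sym irr conn mP exy Ma).
have [aut_alpha _] := mirror_aut_ofP _ _ _ _ Malpha.
suff [p walk_p] : exists p, alpha_walk e (alpha e x y) v p by exists p.
have /connectP[q] := conn v x; elim: q v => [|u q IHq] v /= => [_ <- | /andP[evu uq] qx].
  exists [:: y]; split; rewrite /= ?exy ?big_seq1 //.
  by rewrite (alpha_swaps_edge sym irr conn mP exy Malpha).
have [p walk_p] := IHq u uq qx; exists (u :: rcons p (alpha e x y v)).
exact: (alpha_walk_cons sym irr conn mP aut_alpha evu walk_p).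
Qed.
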